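(* Let $q\ge2$ and $\ell\ge3$ be integers, $n$ a positive integer, $P=\lceil \frac{\log_q n+\log_q\log_q n}{2}\rceil$, and $a\in[0,P-1]$. Then the code $$\mathcal{C}=\{\boldsymbol{x}\in\Sigma_q^n:\ \boldsymbol{x}\text{ is good},\ \mathrm{Inv}(\boldsymbol{x})\equiv a\pmod P\}$$ is an $\ell$-read $(n,3)_q$-code. Moreover, there exists $a\in[0,P-1]$ such that $r(\mathcal{C})\le \log_q P+o(1)=\log_q\log_q n-\log_q 2+o(1)$ as $n\to\infty$.
   Context: $\Sigma_q=\{0,\dots,q-1\}$, $[i,j]=\{i,\dots,j\}$. For $\boldsymbol{x}\in\Sigma_q^n$, $x[i]$ is its $i$-th entry, with $x[i]=0$ for $i\notin[1,n]$, and $\boldsymbol{x}[i,j]=(x[i],\dots,x[j])$. The $\ell$-read vector of $\boldsymbol{x}$ is the length-$(n+\ell-1)$ vector $\mathcal{R}_\ell(\boldsymbol{x})$ whose $i$-th entry is the multiset $\{\{x[i-\ell+1],\dots,x[i]\}\}$. A set $\mathcal{C}\subseteq\Sigma_q^n$ is an $\ell$-read $(n,d)_q$-code if $d_H(\mathcal{R}_\ell(\boldsymbol{x}),\mathcal{R}_\ell(\boldsymbol{y}))\ge d$ for all distinct $\boldsymbol{x},\boldsymbol{y}\in\mathcal{C}$ ($d_H$ = Hamming distance). Redundancy: $r(\mathcal{C})=n-\log_q|\mathcal{C}|$. $\mathrm{Inv}(\boldsymbol{x})=|\{(i,j):1\le i<j\le n,\ x[i]>x[j]\}|$. A sequence is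 alternating if it is of the form $abab\cdots$ (of any length) for two distinct symbols $a,b$. For $\ell\ge3$, $\boldsymbol{x}\in\Sigma_q^n$ is good if for every integer $t\ge\frac{\log_q n+\log_q\log_q n}{2}-1$ and every $i\in[1,n-t\ell-1]$, the sequence $(x[i],x[i+1],x[i+\ell],x[i+\ell+1],\dots,x[i+t\ell],x[i+t\ell+1])$ of length $2(t+1)$ is not alternating. *)

From Stdlib Require Import Reals ClassicalEpsilon.
From mathcomp Require Import all_boot.
Delimit Scope R_scope with Re.
Set Implicit Arguments. Unset Strict Implicit. Unset Printing Implicit Defensive.

Definition word (q n : nat) := (n.-tuple 'I_q)%type.

(* x[i], 1-based; x[i] = 0 for i outside [1,n]. *)
Definition xat (q n : nat) (x : word q n) (i : nat) : nat :=
  if (0 < i <= n)%N then nth 0%N (map val (val x)) i.-1 else 0%N.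

(* i-th entry of the l-read vector, as a list (multiset = list up to perm_eq):
   {{ x[i-l+1], ..., x[i] }}.  Indices <= 0 give 0 (truncated subtraction
   yields index 0, where xat is 0). *)
Definition read_entry (q n : nat) (l : nat) (x : word q n) (i : nat) : seq nat :=
  [seq xat x (i - k) | k <- iota 0 l].

Definition read_dist (q n l : nat) (x y : word q n) : nat :=
  count (fun i => ~~ perm_eq (read_entry l x i) (read_entry l y i)) (iota 1 (n + l - 1)).

Definition is_read_code (q n l d : nat) (C : {set word q n}) : Prop :=
  forall x y, x \in C -> y \in C -> x != y -> (d <= read_dist l x y)%N.

Definition Inv (q n : nat) (x : word q n) : nat :=
  \sum_(1 <= i < n.+1) \sum_(i.+1 <= j < n.+1) (xat x j < xat x i)%N.

Definition alternating (s : seq nat) : Prop :=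
  exists a b : nat, a <> b /\ s = [seq (if odd k then b else a) | k <- iota 0 (size s)].

Definition logq (q : nat) (x : R) : R := (ln x / ln (INR q))%Re.

Definition half_loglog (q n : nat) : R :=
  ((logq q (INR n) + logq q (logq q (INR n))) / 2)%Re.

Definition ceilR (x : R) : Z := (1 - up (- x))%Z.

(* P = ceil((log_q n + log_q log_q n)/2), as a nat (0 if nonpositive) *)
Definition Pval (q n : nat) : nat := Z.to_nat (ceilR (half_loglog q n)).

Definition the_subseq (q n l : nat) (x : word q n) (i t : nat) : seq nat :=
  flatten [seq [:: xat x (i + s * l); xat x (i + s * l + 1)] | s <- iota 0 t.+1].

Definition good (q n l : nat) (x : word q n) : Prop :=
  forall t : nat, (INR t >= half_loglog q n - 1)%Re ->
  forall i : nat, (1 <= i)%N -> (i + t * l + 1 <= n)%N ->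
  ~ alternating (the_subseq l x i t).

Definition pbool (P : Prop) : bool :=
  if excluded_middle_informative P then true else false.

Definition codeC (q n l a : nat) : {set word q n} :=
  [set x : word q n | pbool (good l x) && (Inv x == a %[mod Pval q n])].

Definition redundancy (q n : nat) (C : {set word q n}) : R :=
  (INR n - logq q (INR #|C|))%Re.

(* Let x != y be two codewords whose read vectors are at distance at most 2,
   and let j and j' be the first and last positions where they differ.  The
   read entries at j and at j' + l - 1 differ, so all the other ones agree, and
   comparing the symbol counts of consecutive windows forces j' = j + t l + 1
   for some t, with y obtained from x by swapping the adjacent pairs at
   j + s l, j + s l + 1 (s <= t), on which x alternates between two symbols.
   Since x is good, t + 1 < P; since every swap changes the number of
   inversions by the same +-1, Inv x and Inv y differ by t + 1, contradicting
   Inv x = Inv y mod P.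

   A word that is not good contains such an alternating pattern with
   t >= T := ceil((log_q n + log_q log_q n)/2 - 1); fixing its start leaves
   q^(n - 2T) choices, so at most (n + 1) q^(n - 2T) = O(q^n / log_q n) words
   are bad.  By pigeonhole some residue class a mod P keeps a 1/P share of
   the good words, hence r(C_a) <= log_q P + O(1 / log_q n). *)

From Stdlib Require Import Reals Lra ZArith Classical ClassicalEpsilon.
From mathcomp Require Import all_boot zify.

(** * Sliding windows and the swap structure *)

Definition window_count (l : nat) (X : nat -> nat) (c i : nat) : nat :=
  count (fun k => X (i - k) == c) (iota 0 l).

Lemma window_countS l X c i : 0 < l ->
  window_count l X c i.+1 + (X (i.+1 - l) == c) = window_count l X c i + (X i.+1 == c).
Proof.
case: l => // l _; rewrite /window_count.
have iota_cons : iota 0 l.+1 = 0 :: map (addn 1) (iota 0 l) by rewrite /= -iotaDl.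
have iota_rcons : iota 0 l.+1 = iota 0 l ++ [:: l] by rewrite -addn1 iotaD.
rewrite {1}iota_cons iota_rcons /= count_map count_cat /= subn0 subSS addn0.
under eq_count => k do rewrite /= add1n subSS.
lia.
Qed.

Lemma eq_window_count l X Y c i : (forall k, k < l -> X (i - k) = Y (i - k)) ->
  window_count l X c i = window_count l Y c i.
Proof.
move=> XY; apply: eq_in_count => k; rewrite mem_iota => /andP [_ kl].
by rewrite /= XY.
Qed.

Lemma window_count_perm l q n (x y : word q n) c i :
  perm_eq (read_entry l x i) (read_entry l y i) ->
  window_count l (xat x) c i = window_count l (xat y) c i.
Proof. by move/permP/(_ (pred1 c)); rewrite !count_map. Qed.

Section Differences.
Variables (l : nat) (X Y : nat -> nat).
Hypothesis l_gt0 : 0 < l.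

Lemma window_count_first_diff j : 0 < j -> X j != Y j ->
  (forall k, k < j -> X k = Y k) ->
  window_count l X (X j) j != window_count l Y (X j) j.
Proof.
move=> j_gt0 XYj below.
have := window_countS l X (X j) j.-1 l_gt0; have := window_countS l Y (X j) j.-1 l_gt0.
have := eq_window_count l X Y (X j) j.-1 (fun k _ => below (j.-1 - k) ltac:(lia)).
rewrite prednK // (below (j - l)); last lia.
rewrite eqxx (eq_sym (Y j)) (negbTE XYj); lia.
Qed.

Lemma window_count_last_diff j' : X j' != Y j' ->
  (forall k, j' < k -> X k = Y k) ->
  window_count l X (X j') (j' + l - 1) != window_count l Y (X j') (j' + l - 1).
Proof.
move=> XYj' above.
have := window_countS l X (X j') (j' + l - 1) l_gt0.
have := window_countS l Y (X j') (j' + l - 1) l_gt0.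
have := eq_window_count l X Y (X j') (j' + l) (fun k _ => above (j' + l - k) ltac:(lia)).
have -> : (j' + l - 1).+1 = j' + l by lia.
rewrite (above (j' + l)); last lia.
rewrite addnK eqxx (eq_sym (Y j')) (negbTE XYj'); lia.
Qed.

End Differences.

(* With D_c(k) := [X k = c] - [Y k = c], block_balance X Y j u c k says that
   D_c(k) is D_c(j) for u = 0, - D_c(j) for u = 1 and 0 otherwise. *)
Definition block_balance (X Y : nat -> nat) (j u c k : nat) : Prop :=
  match u with
  | 0 => (X k == c) + (Y j == c) = (Y k == c) + (X j == c)
  | 1 => (X k == c) + (X j == c) = (Y k == c) + (Y j == c)
  | _ => (X k == c) = (Y k == c) :> nat
  end.

Definition periodic_swap (l : nat) (X Y : nat -> nat) (j t : nat) : Prop :=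
  [/\ forall k, k < j -> X k = Y k,
      forall k, j + t * l + 1 < k -> X k = Y k,
      forall s, s <= t -> [/\ X (j + s * l) = X j, Y (j + s * l) = Y j,
                             X (j + s * l + 1) = Y j & Y (j + s * l + 1) = X j]
    & forall s u, s <= t -> 1 < u < l -> X (j + s * l + u) = Y (j + s * l + u)].

Section SwapStructure.
Variables (l : nat) (X Y : nat -> nat) (j j' : nat).
Hypotheses (l_gt2 : 2 < l) (j_gt0 : 0 < j).
Hypotheses (XYj : X j != Y j) (below : forall k, k < j -> X k = Y k).
Hypotheses (XYj' : X j' != Y j') (above : forall k, j' < k -> X k = Y k).
Hypothesis windows : forall m, m != j -> m != j' + l - 1 ->
  forall c, window_count l X c m = window_count l Y c m.

Let l_gt0 : 0 < l. Proof. lia. Qed.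

Lemma first_le_last_diff : j <= j'.
Proof. by rewrite leqNgt; apply/negP => /above XYj_eq; move: XYj; rewrite XYj_eq eqxx. Qed.

Lemma window_balance_shift k c : j + 2 <= k -> k <= j' + l - 2 ->
  (X k == c) + (Y (k - l) == c) = (Y k == c) + (X (k - l) == c) :> nat.
Proof.
have := first_le_last_diff; case: k => [|i] jj' k1 k2; first lia.
have := window_countS l X c i l_gt0; have := window_countS l Y c i l_gt0.
have := windows i.+1 ltac:(apply/eqP; lia) ltac:(apply/eqP; lia) c.
have := windows i ltac:(apply/eqP; lia) ltac:(apply/eqP; lia) c.
lia.
Qed.

Lemma window_balance_first c :
  (X j.+1 == c) + (X j == c) = (Y j.+1 == c) + (Y j == c) :> nat.
Proof.
have := first_le_last_diff; case: j j_gt0 below windows => // i _ below' windows' jj'.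
have := window_countS l X c i l_gt0; have := window_countS l Y c i l_gt0.
have := window_countS l X c i.+1 l_gt0; have := window_countS l Y c i.+1 l_gt0.
have := windows' i ltac:(apply/eqP; lia) ltac:(apply/eqP; lia) c.
have := windows' i.+2 ltac:(apply/eqP; lia) ltac:(apply/eqP; lia) c.
rewrite (below' (i.+1 - l)) ?(below' (i.+2 - l)); lia.
Qed.

Lemma block_balance_all s u c : u < l -> j + s * l + u <= j' + l - 2 ->
  block_balance X Y j u c (j + s * l + u).
Proof.
elim: s u => [|s IH] [|[|u]] ul k_le /=; rewrite ?mul0n ?addn0 ?addn1; try lia.
- exact: window_balance_first.
- have := window_balance_shift (j + u.+2) c ltac:(lia) ltac:(lia).
  rewrite (below (j + u.+2 - l)); lia.
- have := window_balance_shift (j + s.+1 * l) c ltac:(lia) ltac:(lia).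
  have -> : j + s.+1 * l - l = j + s * l by rewrite mulSn; lia.
  have := IH 0 l_gt0 ltac:(lia); rewrite /= addn0; lia.
- have := window_balance_shift ((j + s.+1 * l).+1) c ltac:(lia) ltac:(lia).
  have -> : (j + s.+1 * l).+1 - l = j + s * l + 1 by rewrite mulSn; lia.
  have := IH 1 ltac:(lia) ltac:(lia); rewrite /=; lia.
- have := window_balance_shift (j + s.+1 * l + u.+2) c ltac:(lia) ltac:(lia).
  have -> : j + s.+1 * l + u.+2 - l = j + s * l + u.+2 by rewrite mulSn; lia.
  have := IH u.+2 ul ltac:(lia); rewrite /=; lia.
Qed.

Lemma last_diff_offset : exists t, j' = j + t * l + 1.
Proof.
have jj' := first_le_last_diff.
have r_lt : (j' - j) %% l < l by rewrite ltn_mod.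
have j'_eq : j' = j + (j' - j) %/ l * l + (j' - j) %% l by have := divn_eq (j' - j) l; lia.
exists ((j' - j) %/ l); move: r_lt j'_eq; set t := _ %/ l.
case: (_ %% l) => [|[|r]] r_lt j'_eq //; exfalso.
- have := block_balance_all t 0 (X j) l_gt0 ltac:(lia).
  have := block_balance_all t 1 (X j) ltac:(lia) ltac:(lia).
  rewrite /= addn0 -[j + t * l]addn0 -j'_eq (above (j' + 1)); last lia.
  rewrite eqxx (eq_sym (Y j)) (negbTE XYj); lia.
- have := block_balance_all t r.+2 (X j') r_lt ltac:(lia).
  rewrite /= -j'_eq eqxx (eq_sym (Y j')) (negbTE XYj'); lia.
Qed.

Lemma periodic_swap_of_windows : exists t, j' = j + t * l + 1 /\ periodic_swap l X Y j t.
Proof.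
have [t j'_eq] := last_diff_offset.
have sl_le s : s <= t -> s * l <= t * l by move=> s_le; rewrite leq_mul2r s_le orbT.
exists t; split => //; split => // [k k_gt|s s_le|s u s_le /andP [u_gt u_lt]].
- by apply: above; lia.
- have := sl_le s s_le => {}sl_le.
  have := block_balance_all s 0 (X j) l_gt0 ltac:(lia).
  have := block_balance_all s 0 (Y j) l_gt0 ltac:(lia).
  have := block_balance_all s 1 (X j) ltac:(lia) ltac:(lia).
  have := block_balance_all s 1 (Y j) ltac:(lia) ltac:(lia).
  rewrite /= addn0 !eqxx (eq_sym (X j)) (eq_sym (Y j)) (negbTE XYj).
  by move=> /= e1 e2 e3 e4; split; apply/eqP; rewrite -[_ == _]lt0b; lia.
- have := sl_le s s_le => {}sl_le.
  have := block_balance_all s u (X (j + s * l + u)) u_lt ltac:(lia).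
  case: u u_gt {u_lt} => [|[|u]] //= _; rewrite eqxx.
  by move=> e; apply/eqP; rewrite eq_sym -[_ == _]lt0b; lia.
Qed.

End SwapStructure.

(** * Inversions *)

Definition inversions (n : nat) (f : nat -> nat) : nat :=
  \sum_(1 <= i < n.+1) \sum_(i.+1 <= j < n.+1) (f j < f i).

Definition swap_adj (k i : nat) : nat :=
  if i == k then k.+1 else if i == k.+1 then k else i.

Lemma swap_adjK k : involutive (swap_adj k).
Proof. by move=> i; rewrite /swap_adj; do !case: eqP => /=; lia. Qed.

Lemma sum_swap_adj (H : nat -> nat) n k : 1 <= k -> k < n ->
  \sum_(1 <= i < n.+1) H (swap_adj k i) = \sum_(1 <= i < n.+1) H i.
Proof.
move=> k_ge1 k_lt.
rewrite (@big_cat_nat _ _ _ k) //; last lia.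
rewrite [in RHS](@big_cat_nat _ _ _ k) //; last lia.
rewrite (@big_cat_nat _ _ _ k.+2 k) //; last lia.
rewrite [in RHS](@big_cat_nat _ _ _ k.+2 k) //; last lia.
congr (_ + (_ + _)).
- apply: eq_big_nat => i /andP [_ i_lt].
  by rewrite /swap_adj !ifF //; apply/negbTE/eqP; lia.
- rewrite big_ltn // big_nat1 [in RHS]big_ltn // big_nat1 /swap_adj eqxx ifF ?eqxx.
    exact: addnC.
  by apply/negbTE/eqP; lia.
- apply: eq_big_nat => i /andP [i_gt _].
  by rewrite /swap_adj !ifF //; apply/negbTE/eqP; lia.
Qed.

Lemma inversions_pairs n f : inversions n f =
  \sum_(1 <= i < n.+1) \sum_(1 <= j < n.+1) (i < j) * (f j < f i).
Proof.
rewrite /inversions; apply: eq_big_nat => i /andP [i_ge1 i_le].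
rewrite [in RHS](@big_cat_nat _ _ _ i.+1) //; try lia.
rewrite [X in _ = X + _]big1_seq ?add0n; last first.
  by move=> j /andP [_]; rewrite mem_iota => /andP [_ j_lt]; rewrite ltnNge (_ : j <= i) //; lia.
by apply: eq_big_nat => j /andP [j_gt _]; rewrite j_gt mul1n.
Qed.

Lemma sum_indicator n a c : 1 <= a <= n -> \sum_(1 <= j < n.+1) (j == a) * c = c.
Proof.
move=> a_in; under eq_bigr do rewrite mulnbl.
by rewrite -big_mkcond big_nat1_eq ltnS a_in.
Qed.

Lemma sum_indicator2 n a b c : 1 <= a <= n -> 1 <= b <= n ->
  \sum_(1 <= i < n.+1) \sum_(1 <= j < n.+1) (i == a) * (j == b) * c = c.
Proof.
move=> a_in b_in.
under eq_bigr => i _ do under eq_bigr => j _ do rewrite mulnAC mulnC.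
under eq_bigr => i _ do rewrite sum_indicator //.
exact: sum_indicator.
Qed.

(* Reindexing by swap_adj k changes the order indicator only on the pairs
   (k, k.+1) and (k.+1, k); the two indicator sums compensate for them. *)
Lemma inversions_swap_adj n f k : 1 <= k -> k < n ->
  inversions n (f \o swap_adj k) + (f k.+1 < f k) = inversions n f + (f k < f k.+1).
Proof.
move=> k_ge1 k_lt; rewrite !inversions_pairs.
have -> : \sum_(1 <= i < n.+1) \sum_(1 <= j < n.+1)
      (i < j) * ((f \o swap_adj k) j < (f \o swap_adj k) i)
   = \sum_(1 <= i < n.+1) \sum_(1 <= j < n.+1) (swap_adj k i < swap_adj k j) * (f j < f i).
  transitivity (\sum_(1 <= i < n.+1) \sum_(1 <= j < n.+1)
     (fun a b => (swap_adj k a < swap_adj k b) * (f b < f a)) (swap_adj k i) (swap_adj k j)).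
    by apply: eq_big_nat => i _; apply: eq_big_nat => j _; rewrite /= !swap_adjK.
  under eq_bigr => i _ do rewrite (sum_swap_adj
    (fun b => (swap_adj k (swap_adj k i) < swap_adj k b) * (f b < f (swap_adj k i)))) //.
  exact: (sum_swap_adj (fun a => \sum_(1 <= j < n.+1) (swap_adj k a < swap_adj k j) * (f j < f a))).
rewrite -{1}(sum_indicator2 n k k.+1 (f k.+1 < f k)); try lia.
rewrite -{1}(sum_indicator2 n k.+1 k (f k < f k.+1)); try lia.
rewrite -!big_split /=; apply: eq_big_nat => i _; rewrite -!big_split /=.
apply: eq_big_nat => j _; rewrite /swap_adj.
by repeat (case: eqP => ?; try subst); lia.
Qed.

Lemma eq_inversions n f g : f =1 g -> inversions n f = inversions n g.
Proof. by move=> fg; apply: eq_bigr => i _; apply: eq_bigr => k _; rewrite !fg. Qed.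

(* Y arises from X by t.+1 adjacent transpositions, each creating or removing
   the same inversion between the values X j and Y j. *)
Lemma inversions_periodic_swap n l X Y j t : 1 < l -> 1 <= j -> j + t * l + 1 <= n ->
  periodic_swap l X Y j t ->
  inversions n Y + t.+1 * (Y j < X j) = inversions n X + t.+1 * (X j < Y j).
Proof.
move=> l_gt1 j_ge1 jt_le [below above pairs middle].
have sl_le s : s <= t -> s * l <= t * l by move=> s_le; rewrite leq_mul2r s_le orbT.
pose hybrid s k := if j <= k < j + s * l then Y k else X k.
have hybridS s : s <= t -> hybrid s.+1 =1 hybrid s \o swap_adj (j + s * l).
  move=> s_le i; have [eX eY eX1 eY1] := pairs s s_le; have := sl_le s s_le.
  rewrite /hybrid /swap_adj mulSn /=.
  case: (i =P j + s * l) => [->|i_ne] sl.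
    rewrite ifT ?ifN; try lia.
    by rewrite -[(j + s * l).+1]addn1 eY eX1.
  case: (i =P (j + s * l).+1) => [->|i_ne1].
    rewrite ifT ?ifN; try lia.
    by rewrite -[(j + s * l).+1]addn1 eX eY1.
  case: (ltnP i j) => // j_le; case: (ltnP i (j + s * l)) => i_lt.
    by rewrite ifT //; lia.
  case: (ltnP i (j + (l + s * l))) => // i_lt'.
  have -> /= : i = j + s * l + (i - j - s * l) by lia.
  by symmetry; apply: middle => //; lia.
have hybrid_inv s : s <= t.+1 ->
    inversions n (hybrid s) + s * (Y j < X j) = inversions n X + s * (X j < Y j).
  elim: s => [|s IH] s_le.
    by rewrite !mul0n !addn0; apply: eq_inversions => i; rewrite /hybrid ifN //; lia.
  have sl := sl_le s ltac:(lia); have [eX _ eX1 _] := pairs s ltac:(lia).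
  have h0 : hybrid s (j + s * l) = X j by rewrite /hybrid ifN ?eX //; lia.
  have h1 : hybrid s (j + s * l).+1 = Y j.
    by rewrite /hybrid ifN -?[(j + s * l).+1]addn1 ?eX1 //; lia.
  have := inversions_swap_adj n (hybrid s) (j + s * l) ltac:(lia) ltac:(lia).
  rewrite -(eq_inversions _ _ _ (hybridS s _)) ?h0 ?h1; last lia.
  by have := IH ltac:(lia); rewrite !mulSn; lia.
rewrite -(hybrid_inv t.+1 (leqnn _)); congr (_ + _); apply: eq_inversions => i.
rewrite /hybrid; case: ifP => // /negbT; rewrite negb_and -ltnNge -leqNgt mulSn.
by case/orP => [/below | i_gt]; last rewrite above //; lia.
Qed.

(** * Minimum distance *)

Lemma pboolP (P : Prop) : reflect P (pbool P).
Proof. by rewrite /pbool; case: excluded_middle_informative => p; constructor. Qed.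

Definition ceil_nat (y : R) : nat := Z.to_nat (ceilR y).

Section CeilNat.
Local Open Scope R_scope.

Lemma ceil_nat_ge y : y <= INR (ceil_nat y).
Proof.
rewrite /ceil_nat /ceilR; have [_ up_le] := archimed (- y).
case: (Z_lt_le_dec (1 - up (- y)) 0) => [neg|nonneg].
  have := IZR_lt _ _ neg; rewrite minus_IZR (_ : Z.to_nat (1 - up (- y)) = 0%N); last lia.
  by rewrite /=; lra.
by rewrite INR_IZR_INZ Z2Nat.id // minus_IZR; lra.
Qed.

Lemma ceil_nat_lt y : 0 <= y -> INR (ceil_nat y) < y + 1.
Proof.
rewrite /ceil_nat /ceilR => y_ge0; have [up_gt _] := archimed (- y).
case: (Z_lt_le_dec (1 - up (- y)) 0) => [neg|nonneg].
  by rewrite (_ : Z.to_nat (1 - up (- y)) = 0%N); [rewrite /=; lra | lia].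
by rewrite INR_IZR_INZ Z2Nat.id // minus_IZR; lra.
Qed.

Lemma ceil_nat_min y (t : nat) : y <= INR t -> (ceil_nat y <= t)%N.
Proof.
rewrite /ceil_nat /ceilR => y_le; have [up_gt _] := archimed (- y).
have : IZR (- Z.of_nat t) < IZR (up (- y)) by rewrite opp_IZR -INR_IZR_INZ; lra.
by move/lt_IZR => ?; apply/leP; lia.
Qed.

End CeilNat.

Lemma succ_lt_Pval q n t : (INR t < half_loglog q n - 1)%Re -> t.+1 < Pval q n.
Proof.
move=> t_lt; apply/ltP/INR_lt; have := ceil_nat_ge (half_loglog q n).
by rewrite S_INR /Pval -/(ceil_nat _); lra.
Qed.

Lemma xat_gt q n (x : word q n) k : n < k -> xat x k = 0.
Proof. by move=> k_gt; rewrite /xat ifN //; lia. Qed.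

Lemma xat_inj q n (x y : word q n) : xat x =1 xat y -> x = y.
Proof.
move=> xy; apply/val_inj/(inj_map val_inj).
apply: (@eq_from_nth _ 0); first by rewrite !size_map !size_tuple.
move=> i; rewrite size_map size_tuple => i_lt.
by have := xy i.+1; rewrite /xat /= i_lt.
Qed.

Lemma first_last_diff q n (x y : word q n) : x != y ->
  exists j j', [/\ [&& 0 < j, j <= j' & j' <= n], xat x j != xat y j, xat x j' != xat y j',
    (forall k, k < j -> xat x k = xat y k) & (forall k, j' < k -> xat x k = xat y k)].
Proof.
move=> xy.
have ex_diff : exists k, xat x k != xat y k.
  apply: NNPP => no_diff; move/eqP: xy; apply; apply: xat_inj => k.
  by apply/eqP; apply: contraT => d; case: no_diff; exists k.
have diff_le k : xat x k != xat y k -> k <= n.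
  by rewrite leqNgt; apply: contra => k_gt; rewrite !xat_gt.
case: (ex_minnP ex_diff) => j dj j_min; case: (ex_maxnP ex_diff diff_le) => j' dj' j'_max.
exists j, j'; split => //.
- by rewrite lt0n j'_max // diff_le // !andbT; apply: contraNneq dj => ->.
- by move=> k k_lt; apply/eqP; apply: contraT => /j_min; lia.
- by move=> k k_gt; apply/eqP; apply: contraT => /j'_max; lia.
Qed.

Lemma read_dist_ge q n l (x y : word q n) (s : seq nat) : uniq s ->
  {subset s <= [pred i | (0 < i < n + l) && ~~ perm_eq (read_entry l x i) (read_entry l y i)]} ->
  size s <= read_dist l x y.
Proof.
move=> s_uniq s_sub; rewrite /read_dist -size_filter; apply: uniq_leq_size => // i /s_sub.
by case/andP=> i_range i_diff; rewrite mem_filter i_diff mem_iota; lia.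
Qed.

Lemma window_count_agree q n l (x y : word q n) j j' : 1 < l -> 0 < j -> j <= j' <= n ->
  read_dist l x y < 3 ->
  ~~ perm_eq (read_entry l x j) (read_entry l y j) ->
  ~~ perm_eq (read_entry l x (j' + l - 1)) (read_entry l y (j' + l - 1)) ->
  forall m, m != j -> m != j' + l - 1 ->
  forall c, window_count l (xat x) c m = window_count l (xat y) c m.
Proof.
move=> l_gt1 j_gt0 j_range dist_lt diff_j diff_j' m m_j m_j' c.
have [m0 | m_gt0] := posnP m.
  by apply: eq_window_count => k _; rewrite m0.
have [m_big | m_lt] := leqP (n + l) m.
  by apply: eq_window_count => k k_lt; rewrite !xat_gt //; lia.
have [same | diff_m] := boolP (perm_eq (read_entry l x m) (read_entry l y m)).
  exact: window_count_perm.
suff : 3 <= read_dist l x y by lia.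
apply: (read_dist_ge q n l x y [:: j; j' + l - 1; m]).
  rewrite /= !inE negb_or !(eq_sym _ m) m_j m_j' !andbT; apply/eqP; lia.
by move=> i; rewrite !inE => /or3P [] /eqP ->; apply/andP; split => //; lia.
Qed.

Lemma alternating_the_subseq q n l (x : word q n) i t :
  xat x i != xat x (i + 1) ->
  (forall s, s <= t -> xat x (i + s * l) = xat x i /\ xat x (i + s * l + 1) = xat x (i + 1)) ->
  alternating (the_subseq l x i t).
Proof.
move=> ab periodic; exists (xat x i), (xat x (i + 1)); split; first exact/eqP.
have alt_pat (a b : nat) m p : flatten [seq [:: a; b] | _ <- iota p m] =
    [seq (if odd k then b else a) | k <- iota p.*2 m.*2].
  by elim: m p => [|m IH] p //=; rewrite IH odd_double -doubleS.
have -> : the_subseq l x i t = flatten [seq [:: xat x i; xat x (i + 1)] | _ <- iota 0 t.+1].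
  rewrite /the_subseq; congr flatten; apply/eq_in_map => s; rewrite mem_iota => /andP [_ s_le].
  by have [-> ->] := periodic s s_le.
by rewrite alt_pat size_map size_iota.
Qed.

Lemma eqn_mod_addr_small u d P : 0 < d < P -> (u == u + d %[mod P]) = false.
Proof. by move=> d_range; rewrite -{1}(addn0 u) eqn_modDl mod0n modn_small //; lia. Qed.

Lemma codeC_read_code q n l a : 2 < l -> is_read_code l 3 (codeC q n l a).
Proof.
move=> l_gt2 x y; rewrite !inE => /andP [/pboolP x_good x_inv] /andP [_ y_inv] xy.
rewrite leqNgt; apply/negP => dist_lt.
have [j [j' [/and3P [j_gt0 jj' j'_le] dj dj' below above]]] := first_last_diff q n x y xy.
have l_gt0 : 0 < l by lia.
have diff_j : ~~ perm_eq (read_entry l x j) (read_entry l y j).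
  apply: contraNN (window_count_first_diff l _ _ l_gt0 j j_gt0 dj below).
  by move/(window_count_perm l q n x y (xat x j) j) ->.
have diff_j' : ~~ perm_eq (read_entry l x (j' + l - 1)) (read_entry l y (j' + l - 1)).
  apply: contraNN (window_count_last_diff l _ _ l_gt0 j' dj' above).
  by move/(window_count_perm l q n x y (xat x j') (j' + l - 1)) ->.
have windows := window_count_agree q n l x y j j' (ltnW l_gt2) j_gt0
  (introT andP (conj jj' j'_le)) dist_lt diff_j diff_j'.
have [t [j'_eq swap]] := periodic_swap_of_windows l (xat x) (xat y) j j' l_gt2 j_gt0
  dj below dj' above windows.
have t_lt : t.+1 < Pval q n.
  apply: succ_lt_Pval; apply: Rnot_ge_lt => t_ge.
  apply: (x_good t t_ge j j_gt0); first lia.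
  case: swap => _ _ pairs _; have [_ _ x_j1 _] := pairs 0 (leq0n t).
  rewrite mul0n addn0 in x_j1; apply: alternating_the_subseq; first by rewrite x_j1.
  by move=> s s_le; have [-> _ -> _] := pairs s s_le.
have := inversions_periodic_swap n l (xat x) (xat y) j t (ltnW l_gt2) j_gt0 ltac:(lia) swap.
have inv_eq : Inv x = Inv y %[mod Pval q n] by rewrite (eqP x_inv) (eqP y_inv).
rewrite /Inv -/(inversions n (xat x)) -/(inversions n (xat y)) in inv_eq.
case: (ltngtP (xat x j) (xat y j)) => [lt|gt|eq]; last by rewrite eq eqxx in dj.
- rewrite muln0 addn0 muln1 => inv_y.
  by move/eqP: inv_eq; rewrite inv_y eqn_mod_addr_small //; lia.
- rewrite muln0 addn0 muln1 => inv_x.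
  by move/eqP: inv_eq; rewrite -inv_x eq_sym eqn_mod_addr_small //; lia.
Qed.

(** * Counting bad words *)

Definition periodic_at (q n l T i : nat) (x : word q n) : bool :=
  [forall s : 'I_T.+1, forall e : bool, xat x (i + s * l + e) == xat x (i + e)].

Lemma xat_tnth q n (x : word q n) (k : 'I_n) : xat x k.+1 = tnth x k.
Proof. by rewrite /xat /= ltn_ord (nth_map (tnth x k)) ?size_tuple // -tnth_nth. Qed.

(* A word that is periodic at i is determined by its entries off the 2T block
   positions, so overwriting these positions is injective on such words. *)
Section Overwrite.
Variables (q n l T i : nat).
Hypotheses (l_gt1 : 1 < l) (i_le : i + T * l + 1 <= n).

Definition block_pos (se : 'I_T * bool) : nat := i + (se.1).+1 * l + se.2.

Lemma block_pos_inj : injective block_pos.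
Proof.
move=> [s1 e1] [s2 e2]; rewrite /block_pos /= => pos_eq.
have s_eq : s1 = s2 :> nat.
  case: (ltngtP s1 s2) => // s_lt; exfalso.
  - by have := leq_mul s_lt (leqnn l); rewrite mulSn; case: e1 e2 pos_eq => [] [] /=; lia.
  - by have := leq_mul s_lt (leqnn l); rewrite mulSn; case: e1 e2 pos_eq => [] [] /=; lia.
by move: pos_eq; rewrite s_eq (val_inj s_eq); case: e1 e2 => [] [] //=; lia.
Qed.

Lemma block_pos_range se : i + 1 < block_pos se <= n.
Proof.
case: se => s e; rewrite /block_pos /=.
by have := leq_mul (ltn_ord s) (leqnn l); rewrite mulSn; case: e => /=; lia.
Qed.

Definition overwrite (x : word q n) (g : {ffun 'I_T * bool -> 'I_q}) : word q n :=
  [tuple if [pick se | block_pos se == k.+1] is Some se then g se else tnth x k | k < n].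

Lemma xat_overwrite x g (k : 'I_n) : xat (overwrite x g) k.+1 =
  if [pick se | block_pos se == k.+1] is Some se then val (g se) else xat x k.+1.
Proof. by rewrite !xat_tnth tnth_mktuple; case: pickP. Qed.

Lemma xat_overwrite_block x g se : xat (overwrite x g) (block_pos se) = g se.
Proof.
have pos_range := block_pos_range se.
have k_lt : (block_pos se).-1 < n by lia.
have -> : block_pos se = (Ordinal k_lt).+1 by rewrite /= prednK //; lia.
rewrite xat_overwrite /= prednK; last lia.
by case: pickP => [se' /eqP /block_pos_inj -> | /(_ se)]; rewrite ?eqxx.
Qed.

Lemma xat_overwrite_off x g p : (forall se, block_pos se != p) ->
  xat (overwrite x g) p = xat x p.
Proof.
move=> off; case: (boolP (0 < p <= n)) => [p_range | p_out]; last by rewrite /xat (negbTE p_out).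
have k_lt : p.-1 < n by lia.
have -> : p = (Ordinal k_lt).+1 by rewrite /= prednK //; lia.
rewrite xat_overwrite; case: pickP => // se /eqP pos_eq.
by move: (off se); rewrite pos_eq /= prednK ?eqxx //; lia.
Qed.

Lemma overwrite_inj x x' g g' : periodic_at q n l T i x -> periodic_at q n l T i x' ->
  overwrite x g = overwrite x' g' -> x = x' /\ g = g'.
Proof.
move=> x_per x'_per ow_eq; split; last first.
  apply/ffunP => se; apply: ord_inj.
  by rewrite -(xat_overwrite_block x g se) -(xat_overwrite_block x' g' se) ow_eq.
apply: xat_inj => p.
have [[[s e] <-] | off] : (exists se, block_pos se = p) \/ forall se, block_pos se != p.
- case: (pickP (fun se => block_pos se == p)) => [se /eqP | none]; first by left; exists se.
  by right => se; rewrite none.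
- have base_off se : block_pos se != i + e by have := block_pos_range se; case: (e); lia.
  have s1_lt : s.+1 < T.+1 by rewrite ltnS.
  move/forallP/(_ (Ordinal s1_lt))/forallP/(_ e)/eqP: x_per.
  move/forallP/(_ (Ordinal s1_lt))/forallP/(_ e)/eqP: x'_per.
  rewrite /block_pos /= => -> ->.
  by rewrite -(xat_overwrite_off x g _ base_off) -(xat_overwrite_off x' g' _ base_off) ow_eq.
- by rewrite -(xat_overwrite_off x g _ off) -(xat_overwrite_off x' g' _ off) ow_eq.
Qed.

Lemma card_periodic_at : #|[set x : word q n | periodic_at q n l T i x]| * q ^ (T * 2) <= q ^ n.
Proof.
set A := [set x | _].
have inj : {in setX A [set: {ffun 'I_T * bool -> 'I_q}] &,
    injective (fun xg => overwrite xg.1 xg.2)}.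
  move=> [x g] [x' g']; rewrite !inE /= !andbT => px px' /(overwrite_inj _ _ _ _ px px').
  by case=> -> ->.
have := card_in_imset inj; rewrite cardsX cardsT card_ffun card_prod !card_ord card_bool => <-.
by have := max_card [set overwrite xg.1 xg.2 | xg in setX A setT]; rewrite card_tuple card_ord.
Qed.

End Overwrite.

Lemma the_subseqS q n l (x : word q n) i t :
  the_subseq l x i t.+1 = xat x i :: xat x (i + 1) :: the_subseq l x (i + l) t.
Proof.
rewrite /the_subseq.
have -> : iota 0 t.+2 = 0 :: map (addn 1) (iota 0 t.+1) by rewrite /= -iotaDl.
rewrite map_cons -map_comp.
under eq_map => s do rewrite /= add1n mulSn addnA.
by rewrite mul0n addn0.
Qed.

Lemma size_the_subseq q n l (x : word q n) i t : size (the_subseq l x i t) = t.+1.*2.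
Proof. by elim: t i => [|t IH] i //; rewrite the_subseqS doubleS -(IH (i + l)). Qed.

Lemma nth_the_subseq q n l (x : word q n) i t s (e : bool) : s <= t ->
  nth 0 (the_subseq l x i t) (s.*2 + e) = xat x (i + s * l + e).
Proof.
elim: s i t => [|s IH] i [|t] s_le //.
- by rewrite /the_subseq /= mul0n !addn0; case: e; rewrite /= ?addn0.
- by rewrite the_subseqS mul0n addn0; case: e; rewrite /= ?addn0.
- rewrite the_subseqS -[nth 0 _ _]/(nth 0 (the_subseq l x (i + l) t) (s.*2 + e)).
  by rewrite IH // mulSn addnA.
Qed.

Lemma alternating_periodic q n l (x : word q n) i t : alternating (the_subseq l x i t) ->
  forall s (e : bool), s <= t -> xat x (i + s * l + e) = xat x (i + e).
Proof.
move=> [a [b [_ alt]]] s e s_le.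
have := nth_the_subseq q n l x i t 0 e (leq0n t); rewrite mul0n addn0 => <-.
rewrite -(nth_the_subseq q n l x i t s e s_le) alt size_the_subseq.
rewrite !(nth_map 0) ?size_iota ?nth_iota; try by case: (e); lia.
by rewrite !add0n oddD odd_double.
Qed.

Lemma not_good_periodic_at q n l T (x : word q n) :
  (forall t : nat, (INR t >= half_loglog q n - 1)%Re -> T <= t) -> ~ good l x ->
  exists2 i, i + T * l + 1 <= n & periodic_at q n l T i x.
Proof.
move=> T_min not_good; apply: NNPP => no_i; apply: not_good => t t_ge i _ i_le alt.
apply: no_i; exists i.
  by have := leq_mul (T_min t t_ge) (leqnn l); lia.
apply/forallP => s; apply/forallP => e; apply/eqP.
by apply: (alternating_periodic q n l x i t alt); have := T_min t t_ge; have := ltn_ord s; lia.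
Qed.

Lemma leq_card_bigcup (I T : finType) (P : pred I) (B : I -> {set T}) :
  #|\bigcup_(i | P i) B i| <= \sum_(i | P i) #|B i|.
Proof.
elim/big_rec2: _ => [|i A m _ A_le]; first by rewrite cards0.
by apply: leq_trans (leq_card_setU _ _) _; rewrite leq_add2l.
Qed.

Lemma card_not_good q n l T : 1 < l ->
  (forall t : nat, (INR t >= half_loglog q n - 1)%Re -> T <= t) ->
  #|~: [set x : word q n | pbool (good l x)]| * q ^ (T * 2) <= n.+1 * q ^ n.
Proof.
move=> l_gt1 T_min.
pose admissible (i : 'I_n.+1) := i + T * l + 1 <= n.
have cover : ~: [set x : word q n | pbool (good l x)] \subset
    \bigcup_(i | admissible i) [set x | periodic_at q n l T i x].
  apply/subsetP => x; rewrite !inE => /pboolP.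
  case/(not_good_periodic_at q n l T x T_min) => i i_le x_per.
  by apply/bigcupP; exists (inord i); rewrite /admissible inordK ?inE //; lia.
have := leq_trans (subset_leq_card cover) (leq_card_bigcup _ _ _ _).
move/leq_mul/(_ (leqnn (q ^ (T * 2)))); move/leq_trans; apply.
rewrite big_distrl /=; apply: (@leq_trans (\sum_(i | admissible i) q ^ n)).
  by apply: leq_sum => i i_le; apply: card_periodic_at.
rewrite sum_nat_cond_const leq_mul2r; apply/orP; right.
by apply: leq_trans (max_card _) _; rewrite card_ord.
Qed.

Lemma card_good_le_codeC q n l : 0 < Pval q n -> exists2 a, a < Pval q n &
  #|[set x : word q n | pbool (good l x)]| <= Pval q n * #|codeC q n l a|.
Proof.
set P := Pval q n => P_gt0.
have [a max_a] := eq_bigmax (fun a : 'I_P => #|codeC q n l a|) (ltac:(by rewrite card_ord)).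
exists a; first exact: ltn_ord.
have cover : [set x : word q n | pbool (good l x)] \subset \bigcup_(a < P) codeC q n l a.
  apply/subsetP => x; rewrite inE => x_good; apply/bigcupP.
  by exists (Ordinal (ltn_pmod (Inv x) P_gt0)); rewrite // inE x_good /= modn_mod eqxx.
apply: leq_trans (leq_trans (subset_leq_card cover) (leq_card_bigcup _ _ _ _)) _.
apply: (@leq_trans (\sum_(b < P) \max_(a < P) #|codeC q n l a|)).
  by apply: leq_sum => b _; exact: leq_bigmax.
by rewrite sum_nat_const card_ord max_a.
Qed.

(** * Redundancy *)

Section RealEstimates.
Local Open Scope R_scope.

Lemma ln_le x y : 0 < x -> x <= y -> ln x <= ln y.
Proof.
move=> x_gt0 xy; case: (Rle_lt_or_eq_dec _ _ xy) => [lt | <-]; last exact: Rle_refl.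
exact/Rlt_le/ln_increasing.
Qed.

Lemma ln_le_inv x y : 0 < x -> 0 < y -> ln x <= ln y -> x <= y.
Proof.
move=> x_gt0 y_gt0 lnxy; apply: Rnot_lt_le => yx.
by have := ln_increasing _ _ y_gt0 yx; lra.
Qed.

Lemma ln_le_sub1 y : 0 < y -> ln y <= y - 1.
Proof.
move=> y_gt0; rewrite -[y - 1]ln_exp; apply: ln_le => //.
by have := exp_ineq1_le (y - 1); lra.
Qed.

Lemma neg_ln_one_sub_le d : 0 <= d <= 1 / 2 -> - ln (1 - d) <= 2 * d.
Proof.
move=> d_range; rewrite -ln_Rinv; last lra.
apply: Rle_trans (ln_le_sub1 _ _) _; first by apply: Rinv_0_lt_compat; lra.
have -> : / (1 - d) - 1 = d / (1 - d) by field; lra.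
apply: (Rmult_le_reg_r (1 - d)); first lra.
have -> : d / (1 - d) * (1 - d) = d by field; lra.
nra.
Qed.

(* ln L = 2 ln (sqrt L) <= 2 sqrt L <= c L as soon as sqrt L >= 2 / c. *)
Lemma ln_le_mul c L : 0 < c -> 4 / c ^ 2 <= L -> ln L <= c * L.
Proof.
move=> c_gt0 L_ge; have L_gt0 : 0 < L by apply: Rlt_le_trans L_ge; apply: Rdiv_lt_0_compat; nra.
have sqrt_gt0 := sqrt_lt_R0 _ L_gt0; have sqrtL := sqrt_sqrt _ (Rlt_le _ _ L_gt0).
have -> : ln L = 2 * ln (sqrt L) by rewrite -{1}sqrtL ln_mult //; ring.
have := ln_le_sub1 _ sqrt_gt0.
have : 4 <= (c * sqrt L) ^ 2.
  have -> : (c * sqrt L) ^ 2 = c ^ 2 * (sqrt L * sqrt L) by ring.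
  rewrite sqrtL.
  by apply: (Rmult_le_reg_r (/ c ^ 2)); [apply: Rinv_0_lt_compat; nra | field_simplify; lra].
have c_sqrt_pos : 0 < c * sqrt L by apply: Rmult_lt_0_compat.
move=> sq_ge; have c_sqrt_ge : 2 <= c * sqrt L.
  by move: (c * sqrt L) sq_ge c_sqrt_pos => x x_sq x_pos; nra.
have -> : c * L = c * sqrt L * sqrt L by rewrite Rmult_assoc sqrtL.
nra.
Qed.

Lemma bad_fraction_le (B Qn a E n L : R) : 1 <= n -> 0 < L -> 0 <= B -> 0 < a -> 0 <= Qn ->
  B * E <= (n + 1) * Qn -> n * L <= a * E -> B <= 2 * a / L * Qn.
Proof.
move=> n_ge1 L_gt0 B_ge0 a_gt0 Qn_ge0 BE_le nL_le.
apply: (Rmult_le_reg_r L) => //; have -> : 2 * a / L * Qn * L = 2 * a * Qn by field; lra.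
have := Rmult_le_compat_l B _ _ B_ge0 nL_le.
have := Rmult_le_compat_l a _ _ (Rlt_le _ _ a_gt0) BE_le.
have : 0 <= a * Qn by nra.
nra.
Qed.

Lemma div_le_iff a b c : 0 < c -> a / c <= b <-> a <= b * c.
Proof.
move=> c_gt0; split=> h.
- by apply: Rle_trans (Rmult_le_compat_r _ _ _ (Rlt_le _ _ c_gt0) h); right; field; lra.
- by apply: (Rmult_le_reg_r c) => //; apply: Rle_trans h; right; field; lra.
Qed.

Lemma le_div_iff a b c : 0 < c -> a <= b / c <-> a * c <= b.
Proof.
move=> c_gt0; split=> h.
- by apply: Rle_trans (Rmult_le_compat_r _ _ _ (Rlt_le _ _ c_gt0) h) _; right; field; lra.
- by apply: (Rmult_le_reg_r c) => //; apply: Rle_trans h _; right; field; lra.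
Qed.

Lemma Rmax_le x y z : Rmax x y <= z -> x <= z /\ y <= z.
Proof. by move=> h; split; apply: Rle_trans h; [apply: Rmax_l | apply: Rmax_r]. Qed.

Section LogBase.
Variable q : nat.
Hypothesis q_ge2 : (2 <= q)%N.
Local Notation Lq := (ln (INR q)).

Lemma INR_base_ge2 : 2 <= INR q.
Proof. by have := le_INR 2 q (elimT leP q_ge2). Qed.

Lemma ln_base_gt0 : 0 < Lq.
Proof. by rewrite -ln_1; apply: ln_increasing; have := INR_base_ge2; lra. Qed.

Lemma ln_eq_logq x : ln x = logq q x * Lq.
Proof. by have := ln_base_gt0; rewrite /logq => ?; field; lra. Qed.

Lemma logq_ge0 x : 1 <= x -> 0 <= logq q x.
Proof.
move=> x_ge1; rewrite /logq; apply: Rmult_le_pos.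
  by rewrite -ln_1; apply: ln_le; lra.
by left; apply/Rinv_0_lt_compat/ln_base_gt0.
Qed.

Lemma mul_logq_le_pow x k : 0 < x -> 0 < logq q x ->
  logq q x + logq q (logq q x) <= INR k -> x * logq q x <= INR q ^ k.
Proof.
move=> x_gt0 L_gt0 k_ge; have Lq_gt0 := ln_base_gt0; have q_ge2r := INR_base_ge2.
have ln_x := ln_eq_logq x; set L := logq q x in L_gt0 k_ge ln_x *.
apply: ln_le_inv; [exact: Rmult_lt_0_compat | apply: pow_lt; lra |].
rewrite ln_mult // ln_pow ?ln_x ?(ln_eq_logq L); last lra.
by apply: Rle_trans (Rmult_le_compat_r _ _ _ (Rlt_le _ _ Lq_gt0) k_ge); lra.
Qed.

Lemma redundancy_le_logq (n : nat) (P C d : R) : 0 <= d <= 1 / 2 -> 0 < P ->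
  (1 - d) * INR q ^ n <= P * C -> INR n - logq q C <= logq q P + 2 * d / Lq.
Proof.
move=> d_range P_gt0 PC_ge; have Lq_gt0 := ln_base_gt0; have q_ge2r := INR_base_ge2.
have Qn_gt0 : 0 < INR q ^ n by apply: pow_lt; lra.
have good_gt0 : 0 < (1 - d) * INR q ^ n by apply: Rmult_lt_0_compat; lra.
have C_gt0 : 0 < C by nra.
have := ln_le _ _ good_gt0 PC_ge; rewrite !ln_mult // ?ln_pow; try lra.
have := neg_ln_one_sub_le d d_range; rewrite /logq => ln_d ln_PC.
have -> : INR n - ln C / Lq = (INR n * Lq - ln C) / Lq by field; lra.
have -> : ln P / Lq + 2 * d / Lq = (ln P + 2 * d) / Lq by field; lra.
by apply: Rmult_le_compat_r; [left; apply: Rinv_0_lt_compat | ]; lra.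
Qed.

Lemma logq_le_half_bound (P L : R) : 0 < P -> 1 <= L -> P <= (L + logq q L) / 2 + 1 ->
  logq q P <= logq q L - logq q 2 + (logq q L + 2) / (L * Lq).
Proof.
move=> P_gt0 L_ge1 P_le; have Lq_gt0 := ln_base_gt0.
have logL_ge0 := logq_ge0 L L_ge1.
set u := (logq q L + 2) / L.
have u_ge0 : 0 <= u by apply: Rmult_le_pos; [lra | left; apply: Rinv_0_lt_compat; lra].
have P_le' : P <= L * / 2 * (1 + u) by rewrite /u; apply: (Rle_trans _ _ _ P_le); right; field; lra.
have := ln_le _ _ P_gt0 P_le'; rewrite !ln_mult ?ln_Rinv; try lra.
have := ln_le_sub1 (1 + u) ltac:(lra); rewrite /logq => ln_u ln_P.
have -> : (logq q L + 2) / (L * Lq) = u / Lq by rewrite /u; field; lra.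
have -> : ln L / Lq - ln 2 / Lq + u / Lq = (ln L - ln 2 + u) / Lq by field; lra.
by apply: Rmult_le_compat_r; [left; apply: Rinv_0_lt_compat | ]; lra.
Qed.

Lemma large_logq_conditions eps : 0 < eps -> exists K, forall L, K <= L ->
  [/\ 1 <= L, 2 * INR q ^ 2 / L <= 1 / 2, 2 * (2 * INR q ^ 2 / L) / Lq <= eps / 2
     & (logq q L + 2) / (L * Lq) <= eps / 2].
Proof.
move=> eps_gt0; have Lq_gt0 := ln_base_gt0.
have eLq_gt0 : 0 < eps * Lq by apply: Rmult_lt_0_compat.
have c_gt0 : 0 < eps * Lq ^ 2 / 4 by have := Rmult_lt_0_compat _ _ eLq_gt0 Lq_gt0; nra.
exists (Rmax (Rmax 1 (4 * INR q ^ 2)) (Rmax (8 * INR q ^ 2 / (eps * Lq))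
  (Rmax (4 / (eps * Lq ^ 2 / 4) ^ 2) (8 / (eps * Lq))))).
move=> L /Rmax_le [/Rmax_le [L_ge1 L_ge_a]] /Rmax_le [L_ge_a' /Rmax_le [L_ge_c L_ge_8]].
move/(div_le_iff _ _ _ eLq_gt0): L_ge_a' => L_ge_a'.
move/(div_le_iff _ _ _ eLq_gt0): L_ge_8 => L_ge_8.
have lnL_le := ln_le_mul _ _ c_gt0 L_ge_c.
have LLq_gt0 : 0 < L * Lq by apply: Rmult_lt_0_compat; lra.
split => //.
- by apply/div_le_iff; lra.
- have -> : 2 * (2 * INR q ^ 2 / L) / Lq = 4 * INR q ^ 2 / (L * Lq) by field; lra.
  by apply/div_le_iff => //; lra.
- have : logq q L <= eps * Lq / 4 * L by apply/div_le_iff => //; lra.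
  by move=> logL_le; apply/div_le_iff => //; lra.
Qed.

Lemma eventually_logq_ge K : exists N : nat, forall n : nat, (N <= n)%N ->
  0 < INR n /\ K <= logq q (INR n).
Proof.
have Lq_gt0 := ln_base_gt0; have exp_gt0 := exp_pos (K * Lq).
have [up_gt _] := archimed (exp (K * Lq)).
exists (Z.to_nat (up (exp (K * Lq)))) => n n_ge.
have n_gt : exp (K * Lq) < INR n.
  have up_ge0 : (0 <= up (exp (K * Lq)))%Z by apply: le_IZR; lra.
  by have := le_INR _ _ (elimT leP n_ge); rewrite INR_IZR_INZ Z2Nat.id //; lra.
split; first lra.
apply/le_div_iff => //; rewrite -[K * Lq]ln_exp.
exact/Rlt_le/ln_increasing.
Qed.

End LogBase.

End RealEstimates.

Lemma INR_addn m n : INR (m + n) = (INR m + INR n)%Re.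
Proof. by rewrite -plusE plus_INR. Qed.

Lemma INR_muln m n : INR (m * n) = (INR m * INR n)%Re.
Proof. by rewrite -multE mult_INR. Qed.

Lemma INR_expn m n : INR (m ^ n) = (INR m ^ n)%Re.
Proof. by elim: n => [|n IH] //=; rewrite expnS INR_muln IH. Qed.

Lemma INR_leq m n : m <= n -> (INR m <= INR n)%Re.
Proof. by move/leP/le_INR. Qed.

Lemma card_not_good_fraction q n l : 2 <= q -> 1 < l -> (0 < INR n)%Re ->
  (1 <= logq q (INR n))%Re ->
  (INR #|~: [set x : word q n | pbool (good l x)]|
     <= 2 * INR q ^ 2 / logq q (INR n) * INR q ^ n)%Re.
Proof.
move=> q_ge2 l_gt1 n_gt0 L_ge1; have q_ge2r := INR_base_ge2 q q_ge2.
have h_eq : half_loglog q n = ((logq q (INR n) + logq q (logq q (INR n))) / 2)%Re by [].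
set L := logq q (INR n) in L_ge1 h_eq *.
set T := ceil_nat (half_loglog q n - 1).
have bad_le := card_not_good q n l T l_gt1 (fun t t_ge => ceil_nat_min _ t (Rge_le _ _ t_ge)).
have {}bad_le := INR_leq _ _ bad_le; rewrite !INR_muln !INR_expn S_INR in bad_le.
have n_ge1 : (1 <= INR n)%Re.
  have n_pos : 0 < n by apply/ltP/INR_lt; rewrite /=; lra.
  by have := INR_leq _ _ n_pos.
have nL_le : (INR n * L <= INR q ^ 2 * INR q ^ (T * 2))%Re.
  rewrite -pow_add; apply: mul_logq_le_pow => //; first by rewrite -/L; lra.
  rewrite -/L plus_INR mult_INR /=; have := ceil_nat_ge (half_loglog q n - 1).
  by rewrite -/T h_eq; lra.
apply: bad_fraction_le n_ge1 _ (pos_INR _) _ _ bad_le nL_le; try lra.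
  by apply: pow_lt; lra.
by apply: pow_le; lra.
Qed.

Lemma codeC_redundancy_small q l eps : 2 <= q -> 1 < l -> (0 < eps)%Re ->
  exists N : nat, forall n : nat, N <= n -> exists2 a : nat, a < Pval q n &
    (redundancy (codeC q n l a) <= logq q (INR (Pval q n)) + eps / 2)%Re /\
    (logq q (INR (Pval q n)) <= logq q (logq q (INR n)) - logq q 2 + eps / 2)%Re.
Proof.
move=> q_ge2 l_gt1 eps_gt0.
have [K K_ok] := large_logq_conditions q q_ge2 eps eps_gt0.
have [N N_ok] := eventually_logq_ge q q_ge2 K.
exists N => n n_ge; have [n_gt0 L_ge] := N_ok n n_ge.
have [L_ge1 d_le d_small loglog_small] := K_ok _ L_ge.
have bad_le := card_not_good_fraction q n l q_ge2 l_gt1 n_gt0 L_ge1.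
have h_eq : half_loglog q n = ((logq q (INR n) + logq q (logq q (INR n))) / 2)%Re by [].
set L := logq q (INR n) in L_ge1 d_le d_small loglog_small h_eq bad_le.
set d := (2 * INR q ^ 2 / L)%Re in bad_le d_le d_small.
have d_ge0 : (0 <= d)%Re.
  by apply: Rmult_le_pos; [nra | left; apply: Rinv_0_lt_compat; lra].
have logL_ge0 := logq_ge0 q q_ge2 L L_ge1.
have P_ge : (half_loglog q n <= INR (Pval q n))%Re := ceil_nat_ge _.
have P_lt : (INR (Pval q n) < (L + logq q L) / 2 + 1)%Re.
  by rewrite -h_eq; apply: ceil_nat_lt; lra.
have P_gt0 : 0 < Pval q n by apply/ltP/INR_lt; rewrite /=; lra.
have [a a_lt good_le] := card_good_le_codeC q n l P_gt0.
have {}good_le := INR_leq _ _ good_le; rewrite INR_muln in good_le.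
have card_split := cardsC [set x : word q n | pbool (good l x)].
rewrite card_tuple card_ord in card_split.
have {}card_split := f_equal INR card_split; rewrite INR_addn INR_expn in card_split.
exists a => //.
have := redundancy_le_logq q q_ge2 n (INR (Pval q n)) (INR #|codeC q n l a|) d
  (conj d_ge0 d_le) ltac:(lra) ltac:(lra).
have := logq_le_half_bound q q_ge2 (INR (Pval q n)) L ltac:(lra) L_ge1 (Rlt_le _ _ P_lt).
by rewrite /redundancy -/L; split; lra.
Qed.

Theorem theorem4 (q l : nat) (hq : (2 <= q)%N) (hl : (3 <= l)%N) :
  (forall n a : nat, (0 < n)%N -> (a < Pval q n)%N ->
     is_read_code l 3 (codeC q n l a))
  /\
  (forall eps : R, (0 < eps)%Re ->
     exists N : nat, forall n : nat, (N <= n)%N ->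
       exists a : nat, (a < Pval q n)%N /\
         (redundancy (codeC q n l a) <= logq q (INR (Pval q n)) + eps)%Re /\
         (redundancy (codeC q n l a)
            <= logq q (logq q (INR n)) - logq q 2 + eps)%Re).
Proof.
split=> [n a _ _ | eps eps_gt0]; first exact: codeC_read_code.
have [N N_ok] := codeC_redundancy_small q l eps hq (ltnW hl) eps_gt0.
exists N => n n_ge; have [a a_lt [red_le P_le]] := N_ok n n_ge.
by exists a; split => //; split; lra.
Qed.
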